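(* Let $0<a<b$. The infinite server problem on the real line with source $0$ is competitive if and only if the infinite server problem on $(\{0\}\cup[a,b],0)$ (the subspace $\{0\}\cup[a,b]$ of the real line with source $0$) is competitive.
   Context: Infinite server problem on $(M,s)$: $M$ is a metric space and $s\in M$ the source; an unbounded number of servers initially reside at $s$. A finite sequence of requests (points of $M$) is revealed one by one; each must be served immediately, without knowledge of future requests, by moving some server to it; the cost is the total distance traveled. The problem is competitive if there is a deterministic online algorithm and constants $\rho,c$ with $ALG(\sigma)\le\rho\,OPT(\sigma)+c$ for all request sequences $\sigma$. *)

From Stdlib Require Import Reals List Arith.
From Coquelicot Require Import Rbar Lub.
Open Scope R_scope.

(* We work with metric subspaces X of the real line (distance |x - y|),
   given by a predicate X : R -> Prop, with a source s. *)

Definition config := nat -> R.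
Definition init_config (s : R) : config := fun _ => s.
Definition move (c : config) (i : nat) (r : R) : config :=
  fun j => if Nat.eqb j i then r else c j.

(* A (deterministic) server-choice rule: given the past requests (oldest first)
   and the current request, return the index of the server sent to the request.
   Deterministic online algorithms are exactly such rules (they only see the
   past and the current request); an offline solution for a fixed sequence is
   also such a rule (the history determines the position in the sequence). *)
Definition rule := list R -> R -> nat.

Fixpoint run_cost (A : rule) (hist : list R) (c : config) (sigma : list R) : R :=
  match sigma with
  | nil => 0
  | r :: sigma' =>
      let i := A hist r in
      Rabs (c i - r) + run_cost A (hist ++ r :: nil) (move c i r) sigma'
  end.

Definition ALG (A : rule) (s : R) (sigma : list R) : R :=
  run_cost A nil (init_config s) sigma.

Definition OPT (s : R) (sigma : list R) : R :=
  real (Glb_Rbar (fun x => exists A : rule, x = ALG A s sigma)).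

Definition competitive (X : R -> Prop) (s : R) : Prop :=
  exists (A : rule) (rho c : R),
    forall sigma : list R, Forall X sigma ->
      ALG A s sigma <= rho * OPT s sigma + c.

(* One direction is immediate: an algorithm for the line also serves the subspace.
   Conversely, with r = b / a, split the nonzero reals into the classes
   +-[a r^k, b r^k); dividing a class by +-r^k maps it into [a, b], and requests
   at 0 are free.  The online algorithm runs, with its own pool of servers, a
   copy of the given algorithm on every rescaled class.  The optimum of a
   rescaled nonzero class is at least a, which absorbs the additive constant,
   so it remains to bound the sum of the class optima by a multiple of OPT.
   Group the classes into three families (0, even k, odd k): a class has
   diameter at most (r - 1) times its size, while two classes of one family are
   separated by (r - 1) / r times their size.  Hence an optimal solution,
   restricted to one family and with every server split into one copy per
   class, serves each class separately at a constant factor more cost. *)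

From Stdlib Require Import Reals Lra Lia List ZArith Cantor.
From Coquelicot Require Import Rbar Lub.
Open Scope R_scope.

Lemma move_same c i r : move c i r i = r.
Proof. unfold move; rewrite Nat.eqb_refl; reflexivity. Qed.

Lemma move_other c i r j : j <> i -> move c i r j = c j.
Proof. intros Hji; unfold move; apply Nat.eqb_neq in Hji; rewrite Hji; reflexivity. Qed.

(* A solution is recorded as its list of (request, server) pairs. *)
Fixpoint serve_cost (c : config) (ls : list (R * nat)) : R :=
  match ls with
  | nil => 0
  | (x, i) :: ls' => Rabs (c i - x) + serve_cost (move c i x) ls'
  end.

Fixpoint trace (A : rule) (hist sigma : list R) : list (R * nat) :=
  match sigma with
  | nil => nil
  | r :: sigma' => (r, A hist r) :: trace A (hist ++ r :: nil) sigma'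
  end.

Lemma run_cost_trace A hist c sigma :
  run_cost A hist c sigma = serve_cost c (trace A hist sigma).
Proof.
  revert hist c; induction sigma as [|r sigma IH]; intros hist c; simpl; auto.
  rewrite IH; reflexivity.
Qed.

Lemma map_fst_trace A hist sigma : map fst (trace A hist sigma) = sigma.
Proof.
  revert hist; induction sigma as [|r sigma IH]; intros hist; simpl; auto.
  rewrite IH; reflexivity.
Qed.

Lemma in_trace A hist sigma p :
  In p (trace A hist sigma) -> exists h, snd p = A h (fst p).
Proof.
  revert hist; induction sigma as [|r sigma IH]; intros hist Hp; simpl in Hp; [tauto|].
  destruct Hp as [<-|Hp]; [eexists; reflexivity | eapply IH; eauto].
Qed.

Lemma serve_cost_ext ls c d :
  (forall p, In p ls -> c (snd p) = d (snd p)) -> serve_cost c ls = serve_cost d ls.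
Proof.
  revert c d; induction ls as [|[x l] ls IH]; intros c d Hcd; simpl; auto.
  replace (c l) with (d l) by (symmetry; apply (Hcd (x, l)); left; reflexivity).
  f_equal.
  apply IH; intros [y l'] Hin; simpl.
  destruct (Nat.eq_dec l' l) as [->|Hne].
  - rewrite !move_same; reflexivity.
  - rewrite !move_other by exact Hne. apply (Hcd (y, l')); right; exact Hin.
Qed.

Lemma serve_cost_ge0 ls c : 0 <= serve_cost c ls.
Proof.
  revert c; induction ls as [|[x l] ls IH]; intros c; simpl; [lra|].
  pose proof (Rabs_pos (c l - x)); pose proof (IH (move c l x)); lra.
Qed.

Definition rule_of_solution (L : list (R * nat)) : rule :=
  fun h _ => snd (nth (length h) L (0, 0%nat)).

Lemma trace_rule_of_solution L pre suf hist :
  L = pre ++ suf -> length hist = length pre ->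
  trace (rule_of_solution L) hist (map fst suf) = suf.
Proof.
  revert pre hist; induction suf as [|[x l] suf IH]; intros pre hist HL Hlen; simpl; auto.
  f_equal.
  - unfold rule_of_solution; rewrite Hlen, HL, nth_middle; reflexivity.
  - apply (IH (pre ++ (x, l) :: nil)).
    + rewrite HL, <- app_assoc; reflexivity.
    + rewrite !length_app; simpl; lia.
Qed.

Lemma ALG_rule_of_solution s L :
  ALG (rule_of_solution L) s (map fst L) = serve_cost (init_config s) L.
Proof.
  unfold ALG; rewrite run_cost_trace.
  rewrite (trace_rule_of_solution L nil L nil); reflexivity.
Qed.

Lemma ALG_ge0 A s sigma : 0 <= ALG A s sigma.
Proof. unfold ALG; rewrite run_cost_trace; apply serve_cost_ge0. Qed.

Lemma OPT_glb s sigma :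
  (forall A, OPT s sigma <= ALG A s sigma) /\
  (forall m, (forall A, m <= ALG A s sigma) -> m <= OPT s sigma).
Proof.
  unfold OPT.
  destruct (Glb_Rbar_correct (fun x => exists A : rule, x = ALG A s sigma)) as [Hlb Hglb].
  assert (Hfin : Rbar_le 0 (Glb_Rbar (fun x => exists A : rule, x = ALG A s sigma)) /\
                 Rbar_le (Glb_Rbar (fun x => exists A : rule, x = ALG A s sigma))
                         (ALG (fun _ _ => 0%nat) s sigma)).
  { split; [apply Hglb; intros x [A ->]; apply ALG_ge0 | apply Hlb; eexists; reflexivity]. }
  split.
  - intros A. specialize (Hlb (ALG A s sigma) (ex_intro _ A eq_refl)).
    destruct (Glb_Rbar _); simpl in *; tauto.
  - intros m Hm. assert (Hle : Rbar_le m (Glb_Rbar (fun x => exists A : rule, x = ALG A s sigma))).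
    { apply Hglb; intros x [A ->]; apply Hm. }
    destruct (Glb_Rbar _); simpl in *; tauto.
Qed.

Lemma OPT_le_serve_cost s L : OPT s (map fst L) <= serve_cost (init_config s) L.
Proof. rewrite <- ALG_rule_of_solution; apply OPT_glb. Qed.

Lemma OPT_ge_serve_cost s sigma m :
  (forall L, map fst L = sigma -> m <= serve_cost (init_config s) L) -> m <= OPT s sigma.
Proof.
  intros Hm; apply OPT_glb; intros A.
  unfold ALG; rewrite run_cost_trace; apply Hm, map_fst_trace.
Qed.

Lemma OPT_ge_serve_cost_mul s sigma m k : 0 < k ->
  (forall L, map fst L = sigma -> m <= k * serve_cost (init_config s) L) -> m <= k * OPT s sigma.
Proof.
  intros Hk Hm.
  assert (Hdiv : m / k <= OPT s sigma).
  { apply OPT_ge_serve_cost; intros L HL; specialize (Hm L HL).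
    apply Rmult_le_reg_l with k; [exact Hk|].
    replace (k * (m / k)) with m by (field; lra); exact Hm. }
  apply Rmult_le_compat_l with (r := k) in Hdiv; [|lra].
  replace (k * (m / k)) with m in Hdiv by (field; lra); exact Hdiv.
Qed.

Lemma OPT_ge0 s sigma : 0 <= OPT s sigma.
Proof. apply OPT_glb; intros A; apply ALG_ge0. Qed.
Lemma serve_cost_reach ls c M x :
  (forall j, Rabs (c j) <= M) -> In x (map fst ls) -> Rabs x <= M + serve_cost c ls.
Proof.
  revert c M; induction ls as [|[y l] ls IH]; intros c M Hc Hx; simpl in *; [tauto|].
  assert (Hy : Rabs y <= M + Rabs (c l - y)).
  { pose proof (Rabs_triang (c l) (y - c l)) as Htri.
    replace (c l + (y - c l)) with y in Htri by ring.
    rewrite Rabs_minus_sym in Htri. pose proof (Hc l); lra. }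
  destruct Hx as [<-|Hx].
  - pose proof (serve_cost_ge0 ls (move c l y)); lra.
  - assert (Hc' : forall j, Rabs (move c l y j) <= M + Rabs (c l - y)).
    { intros j; destruct (Nat.eq_dec j l) as [->|Hne].
      - rewrite move_same; exact Hy.
      - rewrite move_other by exact Hne. pose proof (Hc j); pose proof (Rabs_pos (c l - y)); lra. }
    pose proof (IH _ _ Hc' Hx); lra.
Qed.

Lemma OPT_ge_Rabs sigma x : In x sigma -> Rabs x <= OPT 0 sigma.
Proof.
  intros Hx; apply OPT_ge_serve_cost; intros L HL.
  rewrite <- (Rplus_0_l (serve_cost _ L)).
  apply serve_cost_reach; [|rewrite HL; exact Hx].
  intros j; unfold init_config; rewrite Rabs_R0; lra.
Qed.

Definition scale_request (mu : R) (p : R * nat) : R * nat := (mu * fst p, snd p).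

Lemma serve_cost_scale mu ls c d :
  (forall j, d j = mu * c j) ->
  serve_cost d (map (scale_request mu) ls) = Rabs mu * serve_cost c ls.
Proof.
  revert c d; induction ls as [|[x l] ls IH]; intros c d Hd; simpl; [ring|].
  rewrite (IH (move c l x) (move d l (mu * x))).
  - rewrite Hd, <- Rmult_minus_distr_l, Rabs_mult; ring.
  - intros j; destruct (Nat.eq_dec j l) as [->|Hne].
    + rewrite !move_same; reflexivity.
    + rewrite !move_other by exact Hne; apply Hd.
Qed.

Lemma serve_cost_scale_origin mu ls :
  serve_cost (init_config 0) (map (scale_request mu) ls)
  = Rabs mu * serve_cost (init_config 0) ls.
Proof. apply serve_cost_scale; intros j; unfold init_config; ring. Qed.

Lemma OPT_scale_le mu sigma : Rabs mu * OPT 0 sigma <= OPT 0 (map (Rmult mu) sigma).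
Proof.
  destruct (Req_dec mu 0) as [->|Hmu].
  { rewrite Rabs_R0, Rmult_0_l; apply OPT_ge0. }
  apply OPT_ge_serve_cost; intros L HL.
  assert (Hopt := OPT_le_serve_cost 0 (map (scale_request (/ mu)) L)).
  rewrite serve_cost_scale_origin, Rabs_inv in Hopt.
  replace (map fst (map (scale_request (/ mu)) L)) with sigma in Hopt.
  2:{ rewrite map_map; simpl. rewrite <- (map_map fst (Rmult (/ mu))), HL, map_map.
      rewrite <- map_id at 1. apply map_ext; intros z; field; exact Hmu. }
  pose proof (Rabs_pos_lt mu Hmu).
  apply (Rmult_le_compat_l (Rabs mu)) in Hopt; [|lra].
  rewrite <- Rmult_assoc, Rinv_r, Rmult_1_l in Hopt by lra. exact Hopt.
Qed.

Definition scale_rule (mu : R) (A : rule) : rule :=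
  fun h x => A (map (Rmult mu) h) (mu * x).

Lemma trace_scale_rule mu A hist sigma : mu <> 0 ->
  trace (scale_rule mu A) hist sigma
  = map (scale_request (/ mu)) (trace A (map (Rmult mu) hist) (map (Rmult mu) sigma)).
Proof.
  intros Hmu; revert hist; induction sigma as [|r sigma IH]; intros hist; simpl; auto.
  f_equal.
  - unfold scale_request; simpl; f_equal; field; exact Hmu.
  - rewrite IH, map_app; reflexivity.
Qed.

Lemma ALG_scale_rule mu A sigma : mu <> 0 ->
  ALG (scale_rule mu A) 0 sigma = Rabs (/ mu) * ALG A 0 (map (Rmult mu) sigma).
Proof.
  intros Hmu; unfold ALG; rewrite !run_cost_trace, trace_scale_rule by exact Hmu.
  apply serve_cost_scale_origin.
Qed.

Definition relabel (g : nat -> nat) (p : R * nat) : R * nat := (fst p, g (snd p)).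

Lemma serve_cost_relabel g ls c d :
  (forall i j, g i = g j -> i = j) -> (forall j, c (g j) = d j) ->
  serve_cost c (map (relabel g) ls) = serve_cost d ls.
Proof.
  intros Hg; revert c d; induction ls as [|[x l] ls IH]; intros c d Hcd; simpl; auto.
  rewrite Hcd; f_equal; apply IH.
  intros j; destruct (Nat.eq_dec j l) as [->|Hne].
  - rewrite !move_same; reflexivity.
  - rewrite (move_other d), move_other by (auto; intros E; apply Hne, Hg, E). apply Hcd.
Qed.

Lemma serve_cost_zeros ls c :
  (forall p, In p ls -> fst p = 0) -> (forall j, c j = 0) -> serve_cost c ls = 0.
Proof.
  revert c; induction ls as [|[x l] ls IH]; intros c Hls Hc; simpl; auto.
  assert (Hx : x = 0) by (apply (Hls (x, l)); left; reflexivity). subst x.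
  rewrite Hc, IH; [| intros p Hp; apply Hls; right; exact Hp |].
  - rewrite Rminus_0_r, Rabs_R0; ring.
  - intros j; destruct (Nat.eq_dec j l) as [->|Hne];
      [rewrite move_same | rewrite move_other by exact Hne]; auto.
Qed.

Lemma serve_cost_detour ls c d l :
  (forall j, j <> l -> c j = d j) -> serve_cost c ls <= serve_cost d ls + Rabs (c l - d l).
Proof.
  revert c d l; induction ls as [|[y l'] ls IH]; intros c d l Hcd; simpl.
  - pose proof (Rabs_pos (c l - d l)); lra.
  - destruct (Nat.eq_dec l' l) as [->|Hne].
    + assert (Htri : Rabs (c l - y) <= Rabs (d l - y) + Rabs (c l - d l)).
      { pose proof (Rabs_triang (d l - y) (c l - d l)) as Htri.
        replace (d l - y + (c l - d l)) with (c l - y) in Htri by ring; lra. }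
      assert (Hrest := IH (move c l y) (move d l y) l).
      rewrite !move_same, Rminus_diag, Rabs_R0 in Hrest.
      assert (serve_cost (move c l y) ls <= serve_cost (move d l y) ls + 0).
      { apply Hrest; intros j Hj; rewrite !move_other by exact Hj; apply Hcd, Hj. }
      lra.
    + rewrite (Hcd l') by exact Hne.
      assert (Hrest : serve_cost (move c l' y) ls
                      <= serve_cost (move d l' y) ls + Rabs (move c l' y l - move d l' y l)).
      { apply IH; intros j Hj; destruct (Nat.eq_dec j l') as [->|Hne'].
        - rewrite !move_same; reflexivity.
        - rewrite !move_other by exact Hne'; apply Hcd, Hj. }
      rewrite !move_other in Hrest by auto. lra.
Qed.

Lemma serve_cost_filter_le (P : R * nat -> bool) ls c :
  serve_cost c (filter P ls) <= serve_cost c ls.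
Proof.
  revert c; induction ls as [|[x l] ls IH]; intros c; simpl; [lra|].
  destruct (P (x, l)); simpl.
  - pose proof (IH (move c l x)); lra.
  - assert (Hdet := serve_cost_detour ls c (move c l x) l).
    rewrite move_same in Hdet.
    assert (serve_cost c ls <= serve_cost (move c l x) ls + Rabs (c l - x)).
    { apply Hdet; intros j Hj; rewrite move_other by exact Hj; reflexivity. }
    pose proof (IH c); lra.
Qed.

Lemma filter_map_fst (g : R * nat -> R * nat) (f : R -> bool) ls :
  (forall p, fst (g p) = fst p) ->
  filter (fun p => f (fst p)) (map g ls) = map g (filter (fun p => f (fst p)) ls).
Proof.
  intros Hg; induction ls as [|p ls IH]; simpl; auto.
  rewrite Hg; destruct (f (fst p)); simpl; rewrite IH; reflexivity.
Qed.

Lemma map_fst_filter (f : R -> bool) (ls : list (R * nat)) :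
  map fst (filter (fun p => f (fst p)) ls) = filter f (map fst ls).
Proof.
  induction ls as [|p ls IH]; simpl; auto.
  destruct (f (fst p)); simpl; rewrite IH; reflexivity.
Qed.

Definition label_consistent {T : Type} (f : R -> T) (ls : list (R * nat)) : Prop :=
  forall p q, In p ls -> In q ls -> snd p = snd q -> f (fst p) = f (fst q).

Lemma label_consistent_filter {T : Type} (f : R -> T) P ls :
  label_consistent f ls -> label_consistent f (filter P ls).
Proof.
  intros Hf p q Hp Hq; apply filter_In in Hp; apply filter_In in Hq; apply Hf; tauto.
Qed.

Lemma label_consistent_factor {T U : Type} (f : R -> T) (g : R -> U) ls :
  (forall x y, f x = f y -> g x = g y) -> label_consistent f ls -> label_consistent g ls.
Proof. intros Hfg Hf p q Hp Hq E; apply Hfg, Hf; assumption. Qed.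

Lemma serve_cost_split (P : R -> bool) ls c :
  label_consistent P ls ->
  serve_cost c ls = serve_cost c (filter (fun p => P (fst p)) ls)
                    + serve_cost c (filter (fun p => negb (P (fst p))) ls).
Proof.
  revert c; induction ls as [|[x l] ls IH]; intros c HP; simpl; [ring|].
  assert (HPls : label_consistent P ls) by (intros p q Hp Hq; apply HP; right; assumption).
  assert (Hl : forall p, In p ls -> snd p = l -> P (fst p) = P x)
    by (intros p Hp Hpl; apply (HP p (x, l)); simpl; auto).
  rewrite (IH (move c l x) HPls).
  assert (Hother : forall Q, (forall y, Q y = true -> P y <> P x) ->
            serve_cost (move c l x) (filter (fun p => Q (fst p)) ls)
            = serve_cost c (filter (fun p => Q (fst p)) ls)).
  { intros Q HQ; apply serve_cost_ext; intros [y l'] Hin.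
    apply filter_In in Hin as [Hin Hy]; simpl in *.
    apply move_other; intros ->. apply (HQ y Hy), (Hl (y, l) Hin eq_refl). }
  destruct (P x) eqn:HPx; simpl.
  - rewrite (Hother (fun y => negb (P y))) by (intros y Hy; destruct (P y); discriminate).
    ring.
  - rewrite (Hother P) by (intros y Hy; rewrite Hy; discriminate). ring.
Qed.

Definition sumR (f : nat -> R) (K : list nat) : R :=
  fold_right (fun k s => f k + s) 0 K.

Lemma sumR_le f g K : (forall k, In k K -> f k <= g k) -> sumR f K <= sumR g K.
Proof.
  induction K as [|k K IH]; intros Hfg; simpl; [lra|].
  pose proof (Hfg k (or_introl eq_refl)).
  assert (sumR f K <= sumR g K) by (apply IH; intros; apply Hfg; right; assumption).
  lra.
Qed.

Lemma sumR_scal r f K : sumR (fun k => r * f k) K = r * sumR f K.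
Proof. induction K as [|k K IH]; simpl; [ring|]. rewrite IH; ring. Qed.

Lemma sumR_ext f g K : (forall k, In k K -> f k = g k) -> sumR f K = sumR g K.
Proof.
  induction K as [|k K IH]; intros Hfg; simpl; auto.
  rewrite (Hfg k (or_introl eq_refl)), IH; [reflexivity|].
  intros; apply Hfg; right; assumption.
Qed.

Lemma filter_filter {A : Type} (P Q : A -> bool) l :
  filter P (filter Q l) = filter (fun x => andb (Q x) (P x)) l.
Proof.
  induction l as [|x l IH]; simpl; auto.
  destruct (Q x); simpl; [destruct (P x); simpl; rewrite IH|]; auto.
Qed.

Definition in_class (f : R -> nat) (k : nat) (x : R) : bool := Nat.eqb (f x) k.

Lemma serve_cost_sum_classes (f : R -> nat) K ls c :
  NoDup K -> (forall p, In p ls -> In (f (fst p)) K) -> label_consistent f ls ->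
  serve_cost c ls = sumR (fun k => serve_cost c (filter (fun p => in_class f k (fst p)) ls)) K.
Proof.
  revert ls; induction K as [|k0 K IH]; intros ls HK Hls Hf; simpl.
  - destruct ls as [|p ls]; [reflexivity | destruct (Hls p (or_introl eq_refl))].
  - inversion HK as [|? ? Hk0 HKK]; subst.
    rewrite (serve_cost_split (in_class f k0) ls c)
      by (apply (label_consistent_factor f); [intros x y E; unfold in_class; rewrite E|]; auto).
    f_equal.
    rewrite IH; auto.
    + apply sumR_ext; intros k Hk; f_equal.
      rewrite filter_filter. apply filter_ext; intros [x l]; unfold in_class; simpl.
      destruct (Nat.eqb_spec (f x) k0), (Nat.eqb_spec (f x) k); subst; simpl; tauto.
    + intros p Hp; apply filter_In in Hp as [Hp Hn]; unfold in_class in Hn.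
      destruct (Hls p Hp) as [E|E]; auto. rewrite E, Nat.eqb_refl in Hn; discriminate.
    + apply label_consistent_filter; exact Hf.
Qed.

Definition pairn (k l : nat) : nat := Cantor.to_nat (k, l).

Lemma pairn_inj k l k' l' : pairn k l = pairn k' l' -> k = k' /\ l = l'.
Proof.
  unfold pairn; intros E; apply (f_equal Cantor.of_nat) in E.
  rewrite !Cantor.cancel_of_to in E; inversion E; auto.
Qed.

Definition split_server (cls : R -> nat) (p : R * nat) : R * nat :=
  (fst p, pairn (cls (fst p)) (snd p)).

Lemma split_server_consistent cls ls : label_consistent cls (map (split_server cls) ls).
Proof.
  intros p q Hp Hq E.
  apply in_map_iff in Hp as [p' [<- _]]; apply in_map_iff in Hq as [q' [<- _]].
  apply pairn_inj in E as [E _]; exact E.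
Qed.

Section Separation.
Variable cls : R -> nat.
Variable Fam : R -> Prop.
Variables spread delta : R.
Hypothesis delta_range : 0 < delta <= 1.
Hypothesis spread_ge0 : 0 <= spread.
Hypothesis same_class_close : forall x y, Fam x -> Fam y ->
  cls x = cls y -> Rabs (y - x) <= spread * Rabs x.
Hypothesis other_class_far : forall x y, Fam x -> Fam y ->
  cls x <> cls y -> delta * Rabs x <= Rabs (y - x).

Definition split_factor : R := (1 + spread) / delta.

Lemma split_factor_ge : 1 + spread <= split_factor.
Proof.
  unfold split_factor; apply Rmult_le_reg_r with delta; [lra|].
  unfold Rdiv; rewrite Rmult_assoc, Rinv_l by lra; nra.
Qed.

(* Invariant of the split solution: copy [pairn k l] rests at 0 or at the last
   class-k point served by l. *)
Definition tracks (c c' : config) : Prop :=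
  forall l,
    (forall k, c' (pairn k l) = 0 \/ (Fam (c' (pairn k l)) /\ cls (c' (pairn k l)) = k)) /\
    (c l = 0 \/ (Fam (c l) /\ c' (pairn (cls (c l)) l) = c l)).

Lemma tracks_move c c' l x : Fam x -> tracks c c' ->
  tracks (move c l x) (move c' (pairn (cls x) l) x).
Proof.
  intros Fx Htr l'; split.
  - intros k; destruct (Nat.eq_dec (pairn k l') (pairn (cls x) l)) as [E|E].
    + rewrite E, move_same; right; apply pairn_inj in E as [-> ->]; auto.
    + rewrite move_other by exact E; apply Htr.
  - destruct (Nat.eq_dec l' l) as [->|E].
    + rewrite move_same; right; split; [exact Fx | apply move_same].
    + rewrite move_other by exact E.
      destruct (proj2 (Htr l')) as [E'|[Fc Ec]]; [left; exact E'|right].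
      split; [exact Fc|]. rewrite move_other; [exact Ec|].
      intros E2; apply pairn_inj in E2; tauto.
Qed.

Lemma split_step_le c c' l x : Fam x -> tracks c c' ->
  Rabs (c' (pairn (cls x) l) - x) <= split_factor * Rabs (c l - x).
Proof.
  intros Fx Htr.
  pose proof split_factor_ge as HK. pose proof (Rabs_pos x).
  set (q := c' (pairn (cls x) l)).
  assert (Hq : Rabs (q - x) <= (1 + spread) * Rabs x).
  { unfold q; destruct (proj1 (Htr l) (cls x)) as [E|[Fq Cq]].
    - rewrite E, Rminus_0_l, Rabs_Ropp; nra.
    - pose proof (same_class_close x _ Fx Fq (eq_sym Cq)); nra. }
  destruct (proj2 (Htr l)) as [E|[Fc Ec]].
  - rewrite E, Rminus_0_l, Rabs_Ropp; nra.
  - destruct (Nat.eq_dec (cls (c l)) (cls x)) as [E|E].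
    + unfold q; rewrite <- E, Ec. pose proof (Rabs_pos (c l - x)); nra.
    + assert (Hfar : delta * Rabs x <= Rabs (c l - x)) by (apply other_class_far; auto).
      apply Rle_trans with ((1 + spread) * Rabs x); [exact Hq|].
      unfold split_factor, Rdiv.
      replace ((1 + spread) * Rabs x) with ((1 + spread) * / delta * (delta * Rabs x))
        by (field; lra).
      apply Rmult_le_compat_l; [|exact Hfar].
      apply Rmult_le_pos; [lra | left; apply Rinv_0_lt_compat; lra].
Qed.

Lemma serve_cost_split_server_tracked ls c c' :
  tracks c c' -> (forall p, In p ls -> Fam (fst p)) ->
  serve_cost c' (map (split_server cls) ls) <= split_factor * serve_cost c ls.
Proof.
  revert c c'; induction ls as [|[x l] ls IH]; intros c c' Htr HF; simpl; [lra|].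
  assert (Fx : Fam x) by (apply (HF (x, l)); left; reflexivity).
  pose proof (split_step_le c c' l x Fx Htr).
  pose proof (IH _ _ (tracks_move c c' l x Fx Htr) (fun p Hp => HF p (or_intror Hp))).
  lra.
Qed.

Lemma serve_cost_split_server ls : (forall p, In p ls -> Fam (fst p)) ->
  serve_cost (init_config 0) (map (split_server cls) ls)
  <= split_factor * serve_cost (init_config 0) ls.
Proof.
  apply serve_cost_split_server_tracked.
  intros l; split; [intros k|]; left; reflexivity.
Qed.
End Separation.

Lemma parity_gap k k' : k <> k' -> Z.even k = Z.even k' -> (k + 2 <= k' \/ k' + 2 <= k)%Z.
Proof.
  intros Hne Hev.
  destruct (Z.eq_dec k' (k + 1)) as [->|E1].
  { rewrite Z.even_add in Hev; destruct (Z.even k); discriminate. }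
  destruct (Z.eq_dec k' (k - 1)) as [->|E2].
  { rewrite Z.even_sub in Hev; destruct (Z.even k); discriminate. }
  lia.
Qed.

Definition sign_tag (x : R) : nat :=
  if Rlt_dec 0 x then 1%nat else if Rlt_dec x 0 then 2%nat else 0%nat.

Lemma sign_tag_0 x : sign_tag x = 0%nat <-> x = 0.
Proof.
  unfold sign_tag; destruct (Rlt_dec 0 x); [split; [discriminate | lra]|].
  destruct (Rlt_dec x 0); [split; [discriminate | lra] | split; [lra | reflexivity]].
Qed.

Lemma Rabs_minus_same_sign x y :
  sign_tag x = sign_tag y -> Rabs (y - x) = Rabs (Rabs y - Rabs x).
Proof.
  unfold sign_tag; intros E.
  destruct (Rlt_dec 0 x), (Rlt_dec 0 y); try destruct (Rlt_dec x 0);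
    try destruct (Rlt_dec y 0); try discriminate; split_Rabs; lra.
Qed.

Lemma Rabs_minus_other_sign x y : sign_tag x <> sign_tag y -> Rabs x <= Rabs (y - x).
Proof.
  unfold sign_tag; intros E.
  destruct (Rlt_dec 0 x), (Rlt_dec 0 y); try destruct (Rlt_dec x 0);
    try destruct (Rlt_dec y 0); try congruence; split_Rabs; lra.
Qed.

Definition zcode (k : Z) : nat := Cantor.to_nat (Z.to_nat k, Z.to_nat (- k)).

Lemma zcode_inj k k' : zcode k = zcode k' -> k = k'.
Proof.
  unfold zcode; intros E; apply (f_equal Cantor.of_nat) in E.
  rewrite !Cantor.cancel_of_to in E; inversion E; lia.
Qed.

Section GeometricClasses.
Variables a b : R.
Hypothesis Hab : 0 < a < b.

Definition ratio : R := b / a.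

Lemma ratio_gt1 : 1 < ratio.
Proof.
  unfold ratio; apply Rmult_lt_reg_r with a; [lra|].
  unfold Rdiv; rewrite Rmult_assoc, Rinv_l; lra.
Qed.

Lemma ratio_mul : ratio * a = b.
Proof. unfold ratio; field; lra. Qed.

Lemma Rpower_ratio_pos z : 0 < Rpower ratio z.
Proof. apply exp_pos. Qed.

Lemma Rpower_ratio_succ k : Rpower ratio (IZR (k + 1)) = ratio * Rpower ratio (IZR k).
Proof.
  rewrite plus_IZR, Rpower_plus, Rpower_1 by (pose proof ratio_gt1; lra); ring.
Qed.

Definition scale_index (t : R) : Z := (up (ln (t / a) / ln ratio) - 1)%Z.

Lemma scale_index_spec t : 0 < t ->
  a * Rpower ratio (IZR (scale_index t)) <= t < b * Rpower ratio (IZR (scale_index t)).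
Proof.
  intros Ht; pose proof ratio_gt1.
  set (u := ln (t / a) / ln ratio).
  assert (Hlnr : 0 < ln ratio) by (rewrite <- ln_1; apply ln_increasing; lra).
  assert (Hu : Rpower ratio u = t / a).
  { unfold Rpower, u; replace (ln (t / a) / ln ratio * ln ratio) with (ln (t / a))
      by (field; lra).
    apply exp_ln, Rdiv_lt_0_compat; lra. }
  destruct (archimed u) as [Hup1 Hup2].
  assert (Hk : Rpower ratio (IZR (scale_index t)) <= t / a
               < ratio * Rpower ratio (IZR (scale_index t))).
  { rewrite <- Hu, <- Rpower_ratio_succ; unfold scale_index; fold u.
    replace (up u - 1 + 1)%Z with (up u) by ring; rewrite minus_IZR; split.
    - apply Rle_Rpower; lra.
    - apply Rpower_lt; lra. }
  rewrite <- ratio_mul.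
  destruct Hk as [Hk1 Hk2]; split.
  - apply Rmult_le_compat_l with (r := a) in Hk1; [|lra].
    replace (a * (t / a)) with t in Hk1 by (field; lra); exact Hk1.
  - apply Rmult_lt_compat_l with (r := a) in Hk2; [|lra].
    replace (a * (t / a)) with t in Hk2 by (field; lra); lra.
Qed.

Lemma scale_index_far s t : 0 < s -> 0 < t ->
  (scale_index s + 2 <= scale_index t)%Z -> ratio * s <= t.
Proof.
  intros Hs Ht Hst.
  destruct (scale_index_spec s Hs) as [_ Hs2]; destruct (scale_index_spec t Ht) as [Ht1 _].
  pose proof ratio_gt1.
  assert (Hmono : Rpower ratio (IZR (scale_index s + 1 + 1))
                  <= Rpower ratio (IZR (scale_index t)))
    by (apply Rle_Rpower, IZR_le; lra || lia).
  rewrite !Rpower_ratio_succ in Hmono.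
  rewrite <- ratio_mul in Hs2.
  pose proof (Rpower_ratio_pos (IZR (scale_index s))). nra.
Qed.

Definition cls (x : R) : nat := pairn (sign_tag x) (zcode (scale_index (Rabs x))).

Lemma cls_inv x y : cls x = cls y ->
  sign_tag x = sign_tag y /\ scale_index (Rabs x) = scale_index (Rabs y).
Proof. intros E; apply pairn_inj in E as [E1 E2]; split; [exact E1 | apply zcode_inj, E2]. Qed.

Lemma cls_same_close x y : cls x = cls y -> Rabs (y - x) <= (ratio - 1) * Rabs x.
Proof.
  intros E; destruct (cls_inv x y E) as [Es Ek].
  pose proof ratio_gt1. pose proof ratio_mul.
  destruct (Req_dec x 0) as [->|Hx].
  { assert (y = 0) as -> by (apply sign_tag_0; rewrite <- Es; apply sign_tag_0; reflexivity).
    rewrite Rminus_0_r, Rabs_R0; lra. }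
  assert (Hy : y <> 0) by (intros Hy; apply Hx, sign_tag_0; rewrite Es; apply sign_tag_0, Hy).
  rewrite Rabs_minus_same_sign by exact Es.
  destruct (scale_index_spec (Rabs x) (Rabs_pos_lt x Hx)) as [Hx1 Hx2].
  destruct (scale_index_spec (Rabs y) (Rabs_pos_lt y Hy)) as [Hy1 Hy2].
  rewrite Ek in Hx1, Hx2.
  pose proof (Rpower_ratio_pos (IZR (scale_index (Rabs y)))).
  apply Rabs_le; split; nra.
Qed.

Definition family (x : R) : nat :=
  if Nat.eqb (sign_tag x) 0 then 0%nat
  else if Z.even (scale_index (Rabs x)) then 1%nat else 2%nat.

Lemma family_cls x y : cls x = cls y -> family x = family y.
Proof.
  intros E; destruct (cls_inv x y E) as [Es Ek]; unfold family; rewrite Es, Ek; reflexivity.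
Qed.

Lemma family_range x : In (family x) (0 :: 1 :: 2 :: nil)%nat.
Proof. unfold family; destruct (Nat.eqb _ 0); [|destruct (Z.even _)]; simpl; auto. Qed.

Definition separation : R := (ratio - 1) / ratio.

Lemma separation_range : 0 < separation <= 1 /\ separation <= ratio - 1.
Proof.
  pose proof ratio_gt1; unfold separation.
  split; [split|]; [apply Rdiv_lt_0_compat; lra | |];
    apply Rmult_le_reg_r with ratio; try lra;
    unfold Rdiv; rewrite Rmult_assoc, Rinv_l by lra; nra.
Qed.

Lemma family_separated x y :
  family x = family y -> cls x <> cls y -> separation * Rabs x <= Rabs (y - x).
Proof.
  intros Ef Ec; destruct separation_range as [[D1 D2] D3]; pose proof ratio_gt1.
  unfold family in Ef.
  destruct (Nat.eqb_spec (sign_tag x) 0) as [Ex|Ex].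
  { destruct (Nat.eqb_spec (sign_tag y) 0) as [Ey|Ey];
      [|destruct (Z.even (scale_index (Rabs y))); discriminate].
    apply sign_tag_0 in Ex; apply sign_tag_0 in Ey; subst; contradiction. }
  destruct (Nat.eqb_spec (sign_tag y) 0) as [Ey|Ey];
    [destruct (Z.even (scale_index (Rabs x))); discriminate|].
  assert (Hx : 0 < Rabs x) by (apply Rabs_pos_lt; intros E; apply Ex, sign_tag_0, E).
  assert (Hy : 0 < Rabs y) by (apply Rabs_pos_lt; intros E; apply Ey, sign_tag_0, E).
  destruct (Nat.eq_dec (sign_tag x) (sign_tag y)) as [Es|Es].
  2:{ pose proof (Rabs_minus_other_sign x y Es); nra. }
  rewrite Rabs_minus_same_sign by exact Es.
  assert (Hk : scale_index (Rabs x) <> scale_index (Rabs y))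
    by (intros Ek; apply Ec; unfold cls; rewrite Es, Ek; reflexivity).
  assert (Hev : Z.even (scale_index (Rabs x)) = Z.even (scale_index (Rabs y)))
    by (destruct (Z.even (scale_index (Rabs x))), (Z.even (scale_index (Rabs y)));
        congruence).
  destruct (parity_gap _ _ Hk Hev) as [G|G].
  - pose proof (scale_index_far _ _ Hx Hy G).
    assert (separation * Rabs x <= (ratio - 1) * Rabs x) by (apply Rmult_le_compat_r; lra).
    assert (Rabs x <= ratio * Rabs x) by nra.
    rewrite (Rabs_right (Rabs y - Rabs x)); lra.
  - pose proof (scale_index_far _ _ Hy Hx G).
    assert (Hsep : separation * Rabs x * ratio = (ratio - 1) * Rabs x)
      by (unfold separation; field; lra).
    assert (Rabs y <= ratio * Rabs y) by nra.
    rewrite (Rabs_left1 (Rabs y - Rabs x)) by lra.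
    apply Rmult_le_reg_r with ratio; [lra|]. rewrite Hsep; lra.
Qed.

Definition class_scale (x : R) : R :=
  (if Nat.eqb (sign_tag x) 1 then 1 else -1) * Rpower ratio (IZR (scale_index (Rabs x))).

Lemma class_scale_cls x y : cls x = cls y -> class_scale x = class_scale y.
Proof.
  intros E; destruct (cls_inv x y E) as [Es Ek]; unfold class_scale; rewrite Es, Ek; reflexivity.
Qed.

Lemma class_scale_spec x : x <> 0 -> class_scale x <> 0 /\ a <= / class_scale x * x <= b.
Proof.
  intros Hx; unfold class_scale.
  destruct (scale_index_spec (Rabs x) (Rabs_pos_lt x Hx)) as [H1 H2].
  set (p := Rpower ratio (IZR (scale_index (Rabs x)))) in *.
  assert (Hp : 0 < p) by apply Rpower_ratio_pos.
  assert (Hsc : / ((if Nat.eqb (sign_tag x) 1 then 1 else -1) * p) * x = Rabs x / p).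
  { unfold sign_tag; destruct (Rlt_dec 0 x); simpl.
    - rewrite Rabs_right by lra; field; lra.
    - destruct (Rlt_dec x 0); [|lra]; simpl. rewrite Rabs_left by lra; field; lra. }
  rewrite Hsc; split.
  - destruct (Nat.eqb _ 1); lra.
  - split; apply Rmult_le_reg_r with p; auto; unfold Rdiv;
      rewrite Rmult_assoc, Rinv_l by lra; lra.
Qed.
End GeometricClasses.

Section Classwise.
Variables a b : R.
Hypothesis Hab : 0 < a < b.

Let K : R := split_factor (ratio a b - 1) (separation a b).

Lemma K_ge1 : 1 <= K.
Proof.
  pose proof (ratio_gt1 a b Hab); destruct (separation_range a b Hab) as [Hsep _].
  assert (0 <= ratio a b - 1) by lra.
  pose proof (split_factor_ge (ratio a b - 1) (separation a b) Hsep). unfold K; lra.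
Qed.

Lemma serve_cost_split_family ls f :
  serve_cost (init_config 0)
    (filter (fun p => in_class (family a b) f (fst p)) (map (split_server (cls a b)) ls))
  <= K * serve_cost (init_config 0) ls.
Proof.
  destruct (separation_range a b Hab) as [Hsep _]; pose proof (ratio_gt1 a b Hab).
  rewrite filter_map_fst by reflexivity.
  apply Rle_trans with
    (K * serve_cost (init_config 0) (filter (fun p => in_class (family a b) f (fst p)) ls)).
  - apply (serve_cost_split_server (cls a b) (fun x => family a b x = f) (ratio a b - 1));
      [exact Hsep | lra | | |].
    + intros x y _ _ E; apply (cls_same_close a b Hab), E.
    + intros x y Fx Fy E; apply (family_separated a b Hab); [congruence | exact E].
    + intros p Hp; apply filter_In in Hp as [_ Hp]; apply Nat.eqb_eq, Hp.
  - apply Rmult_le_compat_l; [pose proof K_ge1; unfold K in *; lra|].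
    apply serve_cost_filter_le.
Qed.

Lemma serve_cost_split_classes ls :
  serve_cost (init_config 0) (map (split_server (cls a b)) ls)
  <= 3 * K * serve_cost (init_config 0) ls.
Proof.
  rewrite (serve_cost_sum_classes (family a b) (0 :: 1 :: 2 :: nil)%nat).
  - eapply Rle_trans; [apply sumR_le; intros f _; apply serve_cost_split_family|].
    simpl; lra.
  - repeat constructor; simpl; intuition discriminate.
  - intros p _; apply family_range.
  - apply (label_consistent_factor (cls a b)); [apply family_cls | apply split_server_consistent].
Qed.

(* Any solution of sigma, split by classes, serves every class subsequence. *)
Lemma sum_class_OPT_le sigma :
  sumR (fun k => OPT 0 (filter (in_class (cls a b) k) sigma))
       (nodup Nat.eq_dec (map (cls a b) sigma))
  <= 3 * K * OPT 0 sigma.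
Proof.
  pose proof K_ge1.
  apply OPT_ge_serve_cost_mul; [lra|]; intros L HL.
  set (split := map (split_server (cls a b)) L).
  assert (Hfst : map fst split = sigma) by (unfold split; rewrite map_map; exact HL).
  rewrite <- serve_cost_split_classes; fold split.
  rewrite (serve_cost_sum_classes (cls a b) (nodup Nat.eq_dec (map (cls a b) sigma)) split).
  - apply sumR_le; intros k _.
    rewrite <- Hfst, <- map_fst_filter. apply OPT_le_serve_cost.
  - apply NoDup_nodup.
  - intros p Hp; apply nodup_In; rewrite <- Hfst; apply in_map, in_map, Hp.
  - apply split_server_consistent.
Qed.

(* Each class is served by its own copy of A, run on the class rescaled into [a, b]. *)
Definition classwise (A : rule) : rule := fun h x =>
  pairn (cls a b x)
    (scale_rule (/ class_scale a b x) A (filter (in_class (cls a b) (cls a b x)) h) x).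

Lemma classwise_consistent A sigma : label_consistent (cls a b) (trace (classwise A) nil sigma).
Proof.
  intros p q Hp Hq E.
  destruct (in_trace _ _ _ _ Hp) as [h1 E1]; destruct (in_trace _ _ _ _ Hq) as [h2 E2].
  rewrite E1, E2 in E; apply pairn_inj in E; tauto.
Qed.

Lemma trace_classwise_class A x0 hist sigma :
  filter (fun p => in_class (cls a b) (cls a b x0) (fst p)) (trace (classwise A) hist sigma)
  = map (relabel (pairn (cls a b x0)))
      (trace (scale_rule (/ class_scale a b x0) A)
         (filter (in_class (cls a b) (cls a b x0)) hist)
         (filter (in_class (cls a b) (cls a b x0)) sigma)).
Proof.
  revert hist; induction sigma as [|r sigma IH]; intros hist; simpl; auto.
  destruct (in_class (cls a b) (cls a b x0) r) eqn:Er; simpl.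
  - assert (E : cls a b r = cls a b x0) by (apply Nat.eqb_eq, Er).
    f_equal.
    + unfold relabel, classwise; simpl; rewrite E, (class_scale_cls a b r x0 E); reflexivity.
    + rewrite IH, filter_app; simpl; rewrite Er; reflexivity.
  - rewrite IH, filter_app; simpl; rewrite Er, app_nil_r; reflexivity.
Qed.

Definition linear_ratio (rho c : R) : R := Rmax rho 0 + Rmax c 0 / a.

Lemma linear_ratio_ge0 rho c : 0 <= linear_ratio rho c.
Proof.
  unfold linear_ratio; pose proof (Rmax_r rho 0); pose proof (Rmax_r c 0).
  assert (0 <= Rmax c 0 / a) by (apply Rmult_le_pos; [lra | left; apply Rinv_0_lt_compat; lra]).
  lra.
Qed.

Lemma affine_le_linear rho c t : a <= t -> rho * t + c <= linear_ratio rho c * t.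
Proof.
  intros Ht; unfold linear_ratio.
  pose proof (Rmax_l rho 0); pose proof (Rmax_l c 0); pose proof (Rmax_r c 0).
  assert (rho * t <= Rmax rho 0 * t) by (apply Rmult_le_compat_r; lra).
  assert (Rmax c 0 <= Rmax c 0 / a * t).
  { replace (Rmax c 0 / a * t) with (Rmax c 0 * (t / a)) by (field; lra).
    rewrite <- (Rmult_1_r (Rmax c 0)) at 1; apply Rmult_le_compat_l; [lra|].
    apply Rmult_le_reg_r with a; [lra|].
    unfold Rdiv; rewrite Rmult_assoc, Rinv_l; lra. }
  lra.
Qed.

Variable A : rule.
Variables rho c : R.
Hypothesis A_competitive : forall sigma, Forall (fun x : R => x = 0 \/ (a <= x <= b)) sigma ->
  ALG A 0 sigma <= rho * OPT 0 sigma + c.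

Lemma class_cost_le x0 sigma : In x0 sigma ->
  serve_cost (init_config 0)
    (filter (fun p => in_class (cls a b) (cls a b x0) (fst p)) (trace (classwise A) nil sigma))
  <= linear_ratio rho c * OPT 0 (filter (in_class (cls a b) (cls a b x0)) sigma).
Proof.
  intros Hin.
  set (sk := filter (in_class (cls a b) (cls a b x0)) sigma).
  pose proof (linear_ratio_ge0 rho c); pose proof (OPT_ge0 0 sk).
  assert (Hsk : forall y, In y sk -> cls a b y = cls a b x0)
    by (intros y Hy; apply filter_In in Hy as [_ Hy]; apply Nat.eqb_eq, Hy).
  destruct (Req_dec x0 0) as [->|Hx0].
  { (* requests at the source cost nothing, whatever the servers chosen *)
    rewrite serve_cost_zeros; [nra| |reflexivity].
    intros p Hp; apply filter_In in Hp as [_ Hp]; apply Nat.eqb_eq, (cls_inv a b) in Hp.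
    apply sign_tag_0; rewrite (proj1 Hp); apply sign_tag_0; reflexivity. }
  set (L := class_scale a b x0).
  destruct (class_scale_spec a b Hab x0 Hx0) as [HL HLx]; fold L in HL, HLx.
  rewrite trace_classwise_class; fold L sk; simpl.
  rewrite (serve_cost_relabel _ _ _ (init_config 0))
    by (reflexivity || (intros i j E; apply (pairn_inj _ _ _ _ E))).
  rewrite <- run_cost_trace; fold (ALG (scale_rule (/ L) A) 0 sk).
  rewrite ALG_scale_rule, Rinv_inv by (apply Rinv_neq_0_compat, HL).
  set (s' := map (Rmult (/ L)) sk).
  assert (HX : Forall (fun x : R => x = 0 \/ (a <= x <= b)) s').
  { apply Forall_forall; intros z Hz; apply in_map_iff in Hz as [y [<- Hy]].
    right; assert (Hy0 : y <> 0).
    { intros ->; apply Hx0, sign_tag_0; rewrite <- (proj1 (cls_inv a b _ _ (Hsk 0 Hy))).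
      apply sign_tag_0; reflexivity. }
    unfold L; rewrite <- (class_scale_cls a b y x0 (Hsk y Hy)).
    apply (class_scale_spec a b Hab y Hy0). }
  assert (Hopt_a : a <= OPT 0 s').
  { apply Rle_trans with (Rabs (/ L * x0)); [rewrite Rabs_right; lra|].
    apply OPT_ge_Rabs, in_map, filter_In; split; [exact Hin | apply Nat.eqb_refl]. }
  assert (Hopt_scale : Rabs L * OPT 0 s' <= OPT 0 sk).
  { assert (Hback : map (Rmult L) s' = sk).
    { unfold s'; rewrite map_map, <- map_id; apply map_ext; intros z; field; exact HL. }
    rewrite <- Hback; apply OPT_scale_le. }
  pose proof (Rabs_pos L).
  apply Rle_trans with (Rabs L * (linear_ratio rho c * OPT 0 s')).
  - apply Rmult_le_compat_l; [lra|].
    eapply Rle_trans; [apply A_competitive, HX | apply affine_le_linear, Hopt_a].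
  - rewrite Rmult_comm, Rmult_assoc; apply Rmult_le_compat_l; [lra|].
    rewrite Rmult_comm; exact Hopt_scale.
Qed.

Lemma ALG_classwise_le sigma :
  ALG (classwise A) 0 sigma <= linear_ratio rho c * (3 * K) * OPT 0 sigma.
Proof.
  unfold ALG; rewrite run_cost_trace.
  rewrite (serve_cost_sum_classes (cls a b) (nodup Nat.eq_dec (map (cls a b) sigma))).
  - eapply Rle_trans.
    + apply sumR_le with
        (g := fun k => linear_ratio rho c * OPT 0 (filter (in_class (cls a b) k) sigma)).
      intros k Hk; apply nodup_In, in_map_iff in Hk as [x0 [<- Hx0]].
      apply class_cost_le, Hx0.
    + rewrite sumR_scal, Rmult_assoc.
      apply Rmult_le_compat_l; [apply linear_ratio_ge0 | apply sum_class_OPT_le].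
  - apply NoDup_nodup.
  - intros p Hp; apply nodup_In, in_map.
    rewrite <- (map_fst_trace (classwise A) nil sigma); apply in_map, Hp.
  - apply classwise_consistent.
Qed.
End Classwise.

Lemma competitive_subset (X Y : R -> Prop) s :
  (forall x, Y x -> X x) -> competitive X s -> competitive Y s.
Proof.
  intros HYX [A [rho [c HA]]]; exists A, rho, c; intros sigma Hsigma.
  apply HA; eapply Forall_impl; [exact HYX | exact Hsigma].
Qed.

Theorem corollary2 (a b : R) :
  0 < a < b ->
  (competitive (fun _ : R => True) 0 <->
   competitive (fun x : R => x = 0 \/ (a <= x <= b)) 0).
Proof.
  intros Hab; split.
  - apply competitive_subset; auto.
  - intros [A [rho [c HA]]].
    exists (classwise a b A),
      (linear_ratio a rho c * (3 * split_factor (ratio a b - 1) (separation a b))), 0.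
    intros sigma _; rewrite Rplus_0_r.
    apply ALG_classwise_le; assumption.
Qed.
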